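(* Let $n>5$ and let $R$ be either of the complex Lie algebras $R(g^1_{(n,1)},2)$ ($n$ odd) or $R(g^2_{(n,1)},2)$ defined in the context. Then the second adjoint cohomology group vanishes: $H^2(R,R)=\{0\}$.
   Context: $R(g^1_{(n,1)},2)$ ($n$ odd): Lie algebra with basis $\{e_1,\dots,e_n,x,y\}$ and nonzero brackets (plus antisymmetric counterparts) $[e_1,e_i]=e_{i+1}$ ($2\le i\le n-2$), $[e_i,e_{n-i}]=(-1)^ie_n$ ($2\le i\le\frac{n-1}{2}$), $[e_1,x]=e_1$, $[e_i,x]=(i-2)e_i$ ($2\le i\le n-1$), $[e_n,x]=(n-4)e_n$, $[e_i,y]=e_i$ ($2\le i\le n-1$), $[e_n,y]=2e_n$. $R(g^2_{(n,1)},2)$: Lie algebra with basis $\{e_1,\dots,e_n,x,y\}$ and nonzero brackets (plus antisymmetric counterparts) $[e_1,e_i]=e_{i+1}$ ($2\le i\le n-2$), $[e_i,e_n]=e_{i+2}$ ($2\le i\le n-3$), $[e_1,x]=e_1$, $[e_i,x]=(i-2)e_i$ ($2\le i\le n-1$), $[e_n,x]=2e_n$, $[e_i,y]=e_i$ ($2\le i\le n-1$). $H^2(R,R)$ denotes the second Chevalley–Eilenberg cohomology of the Lie algebra $R$ with coefficients in the adjoint module. *)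

From HB Require Import structures.
From mathcomp Require Import all_boot all_order all_algebra.
Set Implicit Arguments. Unset Strict Implicit. Unset Printing Implicit Defensive.
Import Order.TTheory GRing.Theory Num.Theory.
Local Open Scope ring_scope.

(* A Lie algebra with basis e_0,...,e_(N-1) is given by structure constants
   sc i j k = coefficient of e_k in [e_i, e_j].  Vectors are row vectors. *)
Section LieCohom.
Variables (C : fieldType) (N : nat).

Definition bvec (i : 'I_N) : 'rV[C]_N := delta_mx 0 i.

Definition lbr (sc : 'I_N -> 'I_N -> 'I_N -> C) (x y : 'rV[C]_N) : 'rV[C]_N :=
  \row_k \sum_i \sum_j x 0 i * y 0 j * sc i j k.

Definition ext2 (phi : 'I_N -> 'I_N -> 'rV[C]_N) (x y : 'rV[C]_N) : 'rV[C]_N :=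
  \sum_i \sum_j (x 0 i * y 0 j) *: phi i j.

Definition alternating2 (phi : 'I_N -> 'I_N -> 'rV[C]_N) : Prop :=
  (forall a, phi a a = 0) /\ (forall a b, phi a b = - phi b a).

(* Chevalley-Eilenberg differential d^2 with adjoint coefficients vanishes *)
Definition cocycle2 sc (phi : 'I_N -> 'I_N -> 'rV[C]_N) : Prop :=
  forall a b c : 'I_N,
    let x := bvec a in let y := bvec b in let z := bvec c in
    lbr sc x (ext2 phi y z) - lbr sc y (ext2 phi x z) + lbr sc z (ext2 phi x y)
    - ext2 phi (lbr sc x y) z + ext2 phi (lbr sc x z) y
    - ext2 phi (lbr sc y z) x = 0.

(* phi = d f for a linear map f : L -> L (f v = v *m F) *)
Definition coboundary2 sc (phi : 'I_N -> 'I_N -> 'rV[C]_N) : Prop :=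
  exists F : 'M[C]_N, forall a b : 'I_N,
    phi a b = lbr sc (bvec a) (bvec b *m F) - lbr sc (bvec b) (bvec a *m F)
              - lbr sc (bvec a) (bvec b) *m F.

Definition H2_adj_trivial sc : Prop :=
  forall phi, alternating2 phi -> cocycle2 sc phi -> coboundary2 sc phi.
End LieCohom.

(* Structure constants in 1-based nat indexing: e_1..e_n are 1..n,
   x is n+1, y is n+2.  raw lists each nonzero bracket [u,v] once (one
   orientation); the antisymmetric counterpart is added by sc_of. *)
Section Algebras.
Variable C : fieldType.

Definition ind (b : bool) : C := if b then 1 else 0.

Definition raw1 (n i j k : nat) : C :=
    ind [&& i == 1, 2 <= j <= n - 2 & k == j.+1]%N
  + ind [&& 2 <= i <= (n - 1) %/ 2, j == n - i & k == n]%N * (-1) ^+ i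
  + ind [&& i == 1, j == n.+1 & k == 1]%N
  + ind [&& 2 <= i <= n - 1, j == n.+1 & k == i]%N * (i%:R - 2)
  + ind [&& i == n, j == n.+1 & k == n]%N * ((n - 4)%:R)
  + ind [&& 2 <= i <= n - 1, j == n.+2 & k == i]%N
  + ind [&& i == n, j == n.+2 & k == n]%N * 2.

Definition raw2 (n i j k : nat) : C :=
    ind [&& i == 1, 2 <= j <= n - 2 & k == j.+1]%N
  + ind [&& 2 <= i <= n - 3, j == n & k == i.+2]%N
  + ind [&& i == 1, j == n.+1 & k == 1]%N
  + ind [&& 2 <= i <= n - 1, j == n.+1 & k == i]%N * (i%:R - 2)
  + ind [&& i == n, j == n.+1 & k == n]%N * 2
  + ind [&& 2 <= i <= n - 1, j == n.+2 & k == i]%N.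

Definition sc_of (n : nat) (raw : nat -> nat -> nat -> nat -> C)
  (i j k : 'I_(n.+2)) : C :=
  raw n i.+1 j.+1 k.+1 - raw n j.+1 i.+1 k.+1.

Definition scR1 n := @sc_of n raw1.
Definition scR2 n := @sc_of n raw2.
End Algebras.
Arguments scR1 : clear implicits.
Arguments scR2 : clear implicits.

From HB Require Import structures.
From mathcomp Require Import all_boot all_order all_algebra.
Import Order.TTheory GRing.Theory Num.Theory.
Local Open Scope ring_scope.
From mathcomp Require Import zify ring.
Set Implicit Arguments. Unset Strict Implicit. Unset Printing Implicit Defensive.

(* The torus <x, y> acts diagonally on the basis e_1, ..., e_n, x, y, and the
   brackets are additive for a bigrading (deg, lev) of the nilradical in which
   ad x = deg - 2 lev and ad y = lev.  Cartan's formula L_h = d i_h + i_h d shows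
   that the components of a 2-cocycle of nonzero torus weight are coboundaries,
   so only weight-additive components remain.  The cocycle identity with a torus
   argument makes phi(h, e_j)_j additive along brackets, hence determined by its
   values on the generators e_1, e_2; on the nilradical the remaining components
   are those of the coboundary of a diagonal derivation, built by induction
   along the chain [e_1, e_k] = e_(k+1) and along the one family of brackets
   producing or involving e_n. *)

Section Coordinates.
Variables (C : fieldType) (N : nat) (sc : 'I_N -> 'I_N -> 'I_N -> C).
Implicit Types (a b c k l m : 'I_N) (x y : 'rV[C]_N).

Lemma bvecE a k : bvec C a 0 k = (k == a)%:R.
Proof. by rewrite /bvec mxE eqxx. Qed.

Lemma lbr_bvecl a y k : lbr sc (bvec C a) y 0 k = \sum_l y 0 l * sc a l k.
Proof.
rewrite mxE (big_only1 a) //= => [|i ne _]; last first.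
  by apply: big1 => j _; rewrite bvecE (negbTE ne) !mul0r.
by apply: eq_bigr => l _; rewrite bvecE eqxx mul1r.
Qed.

Lemma lbr_bvec a b k : lbr sc (bvec C a) (bvec C b) 0 k = sc a b k.
Proof.
rewrite lbr_bvecl (big_only1 b) //= => [|l ne _]; first by rewrite bvecE eqxx mul1r.
by rewrite bvecE (negbTE ne) mul0r.
Qed.

Variable phi : 'I_N -> 'I_N -> 'rV[C]_N.
Local Notation p a b k := (phi a b 0 k).

Lemma ext2_bvecr x c k : ext2 phi x (bvec C c) 0 k = \sum_l x 0 l * p l c k.
Proof.
rewrite summxE; apply: eq_bigr => i _; rewrite summxE (big_only1 c) //= => [|j ne _].
  by rewrite mxE bvecE eqxx mulr1.
by rewrite mxE bvecE (negbTE ne) mulr0 mul0r.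
Qed.

Lemma ext2_bvec a b : ext2 phi (bvec C a) (bvec C b) = phi a b.
Proof.
apply/rowP => k; rewrite ext2_bvecr (big_only1 a) //= => [|l ne _].
  by rewrite bvecE eqxx mul1r.
by rewrite bvecE (negbTE ne) mul0r.
Qed.

Lemma cocycle2_coord : cocycle2 sc phi -> forall a b c m,
  \sum_l p b c l * sc a l m - \sum_l p a c l * sc b l m + \sum_l p a b l * sc c l m
  - \sum_l sc a b l * p l c m + \sum_l sc a c l * p l b m
  - \sum_l sc b c l * p l a m = 0.
Proof.
move=> cocycle a b c m; have /rowP/(_ m) := cocycle a b c.
rewrite ![fun_of_matrix (_ + _) _ _]mxE ![fun_of_matrix (- _) _ _]mxE.
rewrite !ext2_bvec !lbr_bvecl !ext2_bvecr.
have sum_lbr a' b' (g : 'I_N -> C) :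
    \sum_l lbr sc (bvec C a') (bvec C b') 0 l * g l = \sum_l sc a' b' l * g l.
  by apply: eq_bigr => l _; rewrite lbr_bvec.
by rewrite !sum_lbr mxE.
Qed.

Definition cobound (F : 'M[C]_N) a b m :=
  \sum_l F b l * sc a l m - \sum_l F a l * sc b l m - \sum_l sc a b l * F l m.

Lemma coboundary2_coord F :
  (forall a b m, p a b m = cobound F a b m) -> coboundary2 sc phi.
Proof.
move=> dF; exists F => a b; apply/rowP => m.
rewrite dF ![fun_of_matrix (_ + _) _ _]mxE ![fun_of_matrix (- _) _ _]mxE.
rewrite !lbr_bvecl /cobound mxE; congr (_ - _ - _).
- by apply: eq_bigr => l _; rewrite -rowE mxE.
- by apply: eq_bigr => l _; rewrite -rowE mxE.
- by apply: eq_bigr => l _; rewrite lbr_bvec.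
Qed.

Lemma coboundD F1 F2 a b m :
  cobound (F1 + F2) a b m = cobound F1 a b m + cobound F2 a b m.
Proof.
rewrite /cobound.
under eq_bigr do rewrite mxE mulrDl.
under [X in _ - X - _]eq_bigr do rewrite mxE mulrDl.
under [X in _ - X]eq_bigr do rewrite mxE mulrDr.
rewrite !big_split /=; ring.
Qed.

End Coordinates.

Lemma pchar0_natr_inj (F : fieldType) : has_pchar0 F ->
  forall m n : nat, m%:R = n%:R :> F -> m = n.
Proof.
move=> /pcharf0P F0 m n; wlog le_mn : m n / (m <= n)%N => [hyp|].
  by case/orP: (leq_total m n) => /hyp // + /esym => /[apply].
move=> /esym/eqP; rewrite -subr_eq0 -natrB // F0 subn_eq0 => le_nm.
by apply/eqP; rewrite eqn_leq le_mn.
Qed.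

Section GradedCochains.
Variables (C : fieldType) (N : nat) (sc : 'I_N -> 'I_N -> 'I_N -> C).
Hypothesis C0 : has_pchar0 C.
Hypothesis sc_anti : forall i j k, sc i j k = - sc j i k.
Variable phi : 'I_N -> 'I_N -> 'rV[C]_N.
Hypotheses (phi_alt : alternating2 phi) (phi_cocycle : cocycle2 sc phi).
Local Notation p a b k := (phi a b 0 k).
Local Notation cobound := (cobound sc).
Implicit Types (a b h j k l m : 'I_N) (F G : 'M[C]_N).

Lemma phi_anti a b k : p a b k = - p b a k.
Proof. by rewrite phi_alt.2 mxE. Qed.

Lemma phi_diag a k : p a a k = 0.
Proof. by rewrite phi_alt.1 mxE. Qed.

Lemma sc_diag a k : sc a a k = 0.
Proof.
apply/eqP; move/eqP: (sc_anti a a k).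
by rewrite -addr_eq0 -mulr2n -mulr_natr mulf_eq0 (pcharf0P _).1 // orbF.
Qed.

Definition contract h : 'M[C]_N := \matrix_(j, l) p h j l.

Lemma cobound_contract h a b m : cobound (contract h) a b m =
  \sum_l p h b l * sc a l m - \sum_l p h a l * sc b l m - \sum_l sc a b l * p h l m.
Proof.
rewrite /cobound; under eq_bigr do rewrite mxE.
under [X in _ - X - _]eq_bigr do rewrite mxE.
by under [X in _ - X]eq_bigr do rewrite mxE.
Qed.

(* Cartan's formula L_h = d i_h + i_h d on the cocycle phi, for h acting
   diagonally with eigenvalues w. *)
Lemma cartan_diag h (w : 'I_N -> C) :
  (forall j k, j != k -> sc j h k = 0) -> (forall j, sc j h j = w j) ->
  forall a b m, (w a + w b - w m) * p a b m = cobound (contract h) a b m.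
Proof.
move=> h_off h_diag a b m; have := cocycle2_coord phi_cocycle h a b m.
have e1 : \sum_l p a b l * sc h l m = - w m * p a b m.
  rewrite (big_only1 m) //= => [|l ne _]; last by rewrite sc_anti h_off ?oppr0 ?mulr0.
  by rewrite sc_anti h_diag mulrN mulNr mulrC.
have e4 : \sum_l sc h a l * p l b m = - w a * p a b m.
  rewrite (big_only1 a) //= => [|l ne _]; first by rewrite sc_anti h_diag.
  by rewrite sc_anti h_off ?oppr0 ?mul0r // eq_sym.
have e5 : \sum_l sc h b l * p l a m = w b * p a b m.
  rewrite (big_only1 b) //= => [|l ne _]; first by rewrite sc_anti h_diag phi_anti mulrNN.
  by rewrite sc_anti h_off ?oppr0 ?mul0r // eq_sym.
have e6 : \sum_l sc a b l * p l h m = - \sum_l sc a b l * p h l m.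
  by rewrite -sumrN; apply: eq_bigr => l _; rewrite phi_anti mulrN.
rewrite e1 e4 e5 e6 cobound_contract => E.
by apply/eqP; rewrite -subr_eq0 -[X in _ == X]E; apply/eqP; ring.
Qed.

Variables (X Y : 'I_N) (deg lev : 'I_N -> nat).
Hypotheses (adX_off : forall j k, j != k -> sc j X k = 0)
           (adY_off : forall j k, j != k -> sc j Y k = 0).
Hypotheses (adX_diag : forall j, sc j X j = (deg j)%:R - (2 * lev j)%:R)
           (adY_diag : forall j, sc j Y j = (lev j)%:R).

Definition weight_sum a b m : Prop :=
  (deg a + deg b = deg m)%N /\ (lev a + lev b = lev m)%N.

Hypothesis sc_graded : forall i j k, sc i j k != 0 -> weight_sum i j k.

Definition wX j : C := (deg j)%:R - (2 * lev j)%:R.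
Definition wY j : C := (lev j)%:R.

Lemma weight_sum_eigen a b m :
  weight_sum a b m -> wX a + wX b = wX m /\ wY a + wY b = wY m.
Proof. by rewrite /wX /wY => -[<- <-]; rewrite !mulnDr !natrD; split => //; ring. Qed.

Lemma eigen_weight_sum a b m :
  wX a + wX b - wX m = 0 -> wY a + wY b - wY m = 0 -> weight_sum a b m.
Proof.
move=> eX eY; have eD : ((deg a + deg b)%N%:R : C) = (deg m)%:R.
  apply/eqP; rewrite -subr_eq0; apply/eqP.
  transitivity ((wX a + wX b - wX m) + 2%:R * (wY a + wY b - wY m)).
    by rewrite /wX /wY natrD !natrM; ring.
  by rewrite eX eY; ring.
move/eqP: eY; rewrite /wY subr_eq0 -natrD => /eqP/(pchar0_natr_inj C0) eY.
by split=> //; apply: (pchar0_natr_inj C0).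
Qed.

(* The contracting homotopy on the components of nonzero weight: dividing
   i_X phi (or i_Y phi) by the weight inverts Cartan's formula. *)
Definition homotopy : 'M[C]_N := \matrix_(j, l)
  (if wX j - wX l != 0 then p X j l / (wX j - wX l)
   else if wY j - wY l != 0 then p Y j l / (wY j - wY l) else 0).

Lemma cobound_scaled F G (c : C) a b m :
  (forall x y, wX x - wX y = wX a + wX b - wX m ->
     wY x - wY y = wY a + wY b - wY m -> F x y = c * G x y) ->
  cobound F a b m = c * cobound G a b m.
Proof.
move=> FG; rewrite /cobound !mulrBr !mulr_sumr.
congr (_ - _ - _); apply: eq_bigr => l _.
- have [->|/sc_graded/weight_sum_eigen[eX eY]] := eqVneq (sc a l m) 0.
    by rewrite !mulr0.
  by rewrite FG ?mulrA // -?eX -?eY; ring.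
- have [->|/sc_graded/weight_sum_eigen[eX eY]] := eqVneq (sc b l m) 0.
    by rewrite !mulr0.
  by rewrite FG ?mulrA // -?eX -?eY; ring.
- have [->|/sc_graded/weight_sum_eigen[eX eY]] := eqVneq (sc a b l) 0.
    by rewrite !(mulr0, mul0r).
  by rewrite FG ?mulrA ?[_ * c]mulrC ?mulrA // -?eX -?eY; ring.
Qed.

Lemma cobound_homotopy a b m :
  cobound homotopy a b m =
  if (wX a + wX b - wX m != 0) || (wY a + wY b - wY m != 0) then p a b m else 0.
Proof.
set mu := wX a + wX b - wX m; set nu := wY a + wY b - wY m.
have cartanX := cartan_diag (w := wX) adX_off adX_diag a b m.
have cartanY := cartan_diag (w := wY) adY_off adY_diag a b m.
have [mu0|mu_neq0] /= := eqVneq mu 0.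
  have [nu0|nu_neq0] /= := eqVneq nu 0.
    rewrite (@cobound_scaled _ 0 0) ?mul0r // => x y.
    by rewrite -/mu -/nu mu0 nu0 mxE => -> ->; rewrite eqxx mul0r.
  rewrite (@cobound_scaled _ (contract Y) nu^-1).
    by rewrite -cartanY -/nu mulrA mulVf ?mul1r.
  by move=> x y; rewrite -/mu -/nu mu0 !mxE => -> ->; rewrite eqxx nu_neq0 /= mulrC.
rewrite (@cobound_scaled _ (contract X) mu^-1).
  by rewrite -cartanX -/mu mulrA mulVf ?mul1r.
by move=> x y; rewrite -/mu -/nu !mxE => -> _; rewrite mu_neq0 mulrC.
Qed.

Lemma cobound_weight0 F :
  (forall j l, F j l != 0 -> deg j = deg l /\ lev j = lev l) ->
  forall a b m, ~ weight_sum a b m -> cobound F a b m = 0.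
Proof.
move=> F_wt0 a b m not_ab; rewrite /cobound !big1 ?subrr ?subr0 // => l _.
- have [->|/F_wt0[dl ll]] := eqVneq (F l m) 0; first by rewrite mulr0.
  have [->|/sc_graded[dab lab]] := eqVneq (sc a b l) 0; first by rewrite mul0r.
  by case: not_ab; rewrite /weight_sum; lia.
- have [->|/F_wt0[da la]] := eqVneq (F a l) 0; first by rewrite mul0r.
  have [->|/sc_graded[dbl lbl]] := eqVneq (sc b l m) 0; first by rewrite mulr0.
  by case: not_ab; rewrite /weight_sum; lia.
- have [->|/F_wt0[db lb]] := eqVneq (F b l) 0; first by rewrite mul0r.
  have [->|/sc_graded[dal lal]] := eqVneq (sc a l m) 0; first by rewrite mulr0.
  by case: not_ab; rewrite /weight_sum; lia.
Qed.

Theorem coboundary2_weight0 F :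
  (forall j l, F j l != 0 -> deg j = deg l /\ lev j = lev l) ->
  (forall a b m, weight_sum a b m -> p a b m = cobound F a b m) ->
  coboundary2 sc phi.
Proof.
move=> F_wt0 F_ok; apply: (coboundary2_coord (F := homotopy + F)) => a b m.
rewrite coboundD cobound_homotopy.
case: ifP => [/orP nz | /norP[/negPn/eqP eX /negPn/eqP eY]].
  rewrite cobound_weight0 ?addr0 // => /weight_sum_eigen[eX eY].
  by case: nz; rewrite ?eX ?eY subrr eqxx.
by rewrite add0r; apply/F_ok/eigen_weight_sum.
Qed.

Hypothesis weight_inj :
  forall l l', deg l = deg l' -> lev l = lev l' -> (0 < deg l)%N -> l = l'.

Lemma sum_mul_sc_graded (g : 'I_N -> C) a m l0 :
  (0 < deg l0)%N -> weight_sum a l0 m -> \sum_l g l * sc a l m = g l0 * sc a l0 m.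
Proof.
move=> pos [d0 l0w]; rewrite (big_only1 l0) //= => l ne _.
have [->|/sc_graded[dl ll]] := eqVneq (sc a l m) 0; first by rewrite mulr0.
have E : l = l0 by apply: weight_inj; lia.
by rewrite E eqxx in ne.
Qed.

Lemma sum_sc_mul_graded (g : 'I_N -> C) a b l0 :
  (0 < deg l0)%N -> weight_sum a b l0 -> \sum_l sc a b l * g l = sc a b l0 * g l0.
Proof.
move=> pos [d0 l0w]; rewrite (big_only1 l0) //= => l ne _.
have [->|/sc_graded[dl ll]] := eqVneq (sc a b l) 0; first by rewrite mul0r.
have E : l = l0 by apply: weight_inj; lia.
by rewrite E eqxx in ne.
Qed.

Lemma sum_mul_sc_ungraded (g : 'I_N -> C) a m :
  (forall l, ~ weight_sum a l m) -> \sum_l g l * sc a l m = 0.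
Proof.
move=> none; apply: big1 => l _.
by have [->|/sc_graded/none] := eqVneq (sc a l m) 0; rewrite ?mulr0.
Qed.

Lemma sum_sc_mul_ungraded (g : 'I_N -> C) a b :
  (forall l, ~ weight_sum a b l) -> \sum_l sc a b l * g l = 0.
Proof.
move=> none; apply: big1 => l _.
by have [->|/sc_graded/none] := eqVneq (sc a b l) 0; rewrite ?mul0r.
Qed.

Hypothesis deg0_torus : forall l, deg l = 0%N -> l = X \/ l = Y.
Hypotheses (degX : deg X = 0%N) (degY : deg Y = 0%N).
Hypotheses (levX : lev X = 0%N) (levY : lev Y = 0%N) (X_neq_Y : X != Y).

Lemma lev_torus l : deg l = 0%N -> lev l = 0%N.
Proof. by case/deg0_torus => ->. Qed.

Lemma sc_torus i j k : deg i = 0%N -> deg j = 0%N -> sc i j k = 0.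
Proof.
move=> di /deg0_torus[]->; have [<-|ne] := eqVneq i k.
- by rewrite adX_diag di lev_torus // muln0 subrr.
- exact: adX_off.
- by rewrite adY_diag lev_torus.
- exact: adY_off.
Qed.

Lemma sum_torus (g : 'I_N -> C) :
  (forall l, l != X -> l != Y -> g l = 0) -> \sum_l g l = g X + g Y.
Proof.
move=> g0; rewrite (bigD1 X) //= (bigD1 Y) 1?eq_sym //= big1 ?addr0 //.
by move=> l /andP[lX lY]; apply: g0.
Qed.

Lemma torus_diag_additive h a b m : deg h = 0%N ->
  (0 < deg a)%N -> (0 < deg b)%N -> weight_sum a b m -> sc a b m != 0 ->
  p h m m = p h a a + p h b b.
Proof.
move=> dh da db abm ab_neq0; have dm : (0 < deg m)%N by case: abm; lia.
have : cobound (contract h) a b m = 0.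
  have [eX eY] := weight_sum_eigen abm.
  case: (deg0_torus dh) => ->.
    by rewrite -(cartan_diag (w := wX) adX_off adX_diag) eX subrr mul0r.
  by rewrite -(cartan_diag (w := wY) adY_off adY_diag) eY subrr mul0r.
have bam : weight_sum b a m by case: abm; split; lia.
rewrite cobound_contract (sum_mul_sc_graded _ db abm) (sum_mul_sc_graded _ da bam).
rewrite (sum_sc_mul_graded _ dm abm) [sc b a m]sc_anti => /eqP.
have -> : forall u v w : C, u * sc a b m - v * - sc a b m - sc a b m * w =
    sc a b m * (u + v - w) by move=> u v w; ring.
by rewrite mulf_eq0 (negbTE ab_neq0) subr_eq0 addrC => /eqP.
Qed.

Lemma torus_pair_eigen E : (0 < deg E)%N -> wX E * p X Y X + wY E * p X Y Y = 0.
Proof.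
move=> dE; have := cocycle2_coord phi_cocycle X Y E E.
have t1 : \sum_l p Y E l * sc X l E = - wX E * p Y E E.
  rewrite (big_only1 E) //= => [|l ne _]; last by rewrite sc_anti adX_off ?oppr0 ?mulr0.
  by rewrite sc_anti adX_diag mulrN mulNr mulrC.
have t2 : \sum_l p X E l * sc Y l E = - wY E * p X E E.
  rewrite (big_only1 E) //= => [|l ne _]; last by rewrite sc_anti adY_off ?oppr0 ?mulr0.
  by rewrite sc_anti adY_diag mulrN mulNr mulrC.
have t3 : \sum_l p X Y l * sc E l E = p X Y X * wX E + p X Y Y * wY E.
  rewrite sum_torus ?adX_diag ?adY_diag // => l lX lY.
  have [->|/sc_graded[dl _]] := eqVneq (sc E l E) 0; first by rewrite mulr0.
  have /deg0_torus[] : deg l = 0%N by lia.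
    by move=> eq_l; rewrite eq_l eqxx in lX.
  by move=> eq_l; rewrite eq_l eqxx in lY.
have t4 : \sum_l sc X Y l * p l E E = 0.
  by rewrite big1 // => l _; rewrite sc_torus ?mul0r.
have t5 : \sum_l sc X E l * p l Y E = wX E * p Y E E.
  rewrite (big_only1 E) //= => [|l ne _]; first by rewrite sc_anti adX_diag phi_anti /wX; ring.
  by rewrite sc_anti adX_off ?oppr0 ?mul0r // eq_sym.
have t6 : \sum_l sc Y E l * p l X E = wY E * p X E E.
  rewrite (big_only1 E) //= => [|l ne _]; first by rewrite sc_anti adY_diag phi_anti /wY; ring.
  by rewrite sc_anti adY_off ?oppr0 ?mul0r // eq_sym.
by rewrite t1 t2 t3 t4 t5 t6 => <-; ring.
Qed.

Variables E1 E2 : 'I_N.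
Hypotheses (degE1 : deg E1 = 1%N) (levE1 : lev E1 = 0%N).
Hypotheses (degE2 : deg E2 = 2%N) (levE2 : lev E2 = 1%N).

(* A diagonal derivation f of the nilradical, extended to the torus through
   E1, E2, which are dual to it: wX E1 = wY E2 = 1 and wY E1 = wX E2 = 0. *)
Definition weight0_cochain (f : 'I_N -> C) : 'M[C]_N := \matrix_(j, l)
  (if (0 < deg j)%N then (j == l)%:R * f j
   else if (0 < deg l)%N then 0
   else - p j (if l == X then E1 else E2) (if l == X then E1 else E2)).

Lemma cobound_anti F a b m : cobound F a b m = - cobound F b a m.
Proof.
rewrite /cobound; have -> : \sum_l sc b a l * F l m = - \sum_l sc a b l * F l m.
  by rewrite -sumrN; apply: eq_bigr => l _; rewrite sc_anti mulNr.
ring.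
Qed.

Lemma cobound_weight0_nil f a b m : (0 < deg a)%N -> (0 < deg b)%N -> (0 < deg m)%N ->
  cobound (weight0_cochain f) a b m = (f a + f b - f m) * sc a b m.
Proof.
move=> da db dm; rewrite /cobound.
rewrite (big_only1 b) //= => [|l ne _]; last by rewrite mxE db eq_sym (negbTE ne) !mul0r.
rewrite (big_only1 a) //= => [|l ne _]; last by rewrite mxE da eq_sym (negbTE ne) !mul0r.
rewrite (big_only1 m) //= => [|l ne _]; last first.
  by rewrite mxE; case: ifP => _; rewrite ?(negbTE ne) ?dm ?mul0r mulr0.
by rewrite !mxE da db dm !eqxx [sc b a m]sc_anti !mul1r; ring.
Qed.

Lemma cobound_weight0_torus_nil f h j : deg h = 0%N -> (0 < deg j)%N ->
  cobound (weight0_cochain f) h j j = p h E1 E1 * wX j + p h E2 E2 * wY j.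
Proof.
move=> dh dj; rewrite /cobound.
rewrite (big_only1 j) //= => [|l ne _]; last by rewrite mxE dj eq_sym (negbTE ne) !mul0r.
rewrite sum_torus => [|l lX lY]; last first.
  rewrite mxE dh /=; case: (posnP (deg l)) => [/deg0_torus[] eq_l|_]; last by rewrite mul0r.
    by rewrite eq_l eqxx in lX.
  by rewrite eq_l eqxx in lY.
rewrite (big_only1 j) //= => [|l ne _]; last first.
  by rewrite mxE; case: ifP => _; rewrite ?(negbTE ne) ?dj ?mul0r mulr0.
rewrite !mxE dh degX degY dj eqxx /= eq_sym (negbTE X_neq_Y) eqxx.
by rewrite adX_diag adY_diag /wX /wY !mul1r; ring.
Qed.

Lemma cobound_weight0_torus f a b m : deg a = 0%N -> deg b = 0%N ->
  cobound (weight0_cochain f) a b m = 0.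
Proof.
move=> da db; rewrite /cobound !big1 ?subrr // => l _.
- by rewrite sc_torus ?mul0r.
- rewrite mxE da /=; case: (posnP (deg l)) => [dl|_]; last by rewrite mul0r.
  by rewrite sc_torus ?mulr0.
- rewrite mxE db /=; case: (posnP (deg l)) => [dl|_]; last by rewrite mul0r.
  by rewrite sc_torus ?mulr0.
Qed.

Lemma phi_torus a b m : deg a = 0%N -> deg b = 0%N -> deg m = 0%N -> p a b m = 0.
Proof.
move=> /deg0_torus da /deg0_torus db /deg0_torus dm.
have pXYX : p X Y X = 0.
  have := torus_pair_eigen (E := E1); rewrite /wX /wY degE1 levE1 subr0 mul1r mul0r addr0.
  by apply.
have pXYY : p X Y Y = 0.
  have := torus_pair_eigen (E := E2); rewrite /wX /wY degE2 levE2 subrr mul1r mul0r add0r.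
  by apply.
have pXY : p X Y m = 0 by case: dm => ->.
case: da db => -> [] ->; rewrite ?phi_diag //.
by rewrite phi_anti pXY oppr0.
Qed.

Theorem coboundary2_of_nilradical (f : 'I_N -> C) :
  (forall a b m, (0 < deg a)%N -> (0 < deg b)%N -> weight_sum a b m ->
     p a b m = (f a + f b - f m) * sc a b m) ->
  (forall h j, deg h = 0%N -> (0 < deg j)%N ->
     p h j j = p h E1 E1 * wX j + p h E2 E2 * wY j) ->
  coboundary2 sc phi.
Proof.
move=> nil_ok torus_ok; apply: (@coboundary2_weight0 (weight0_cochain f)).
  move=> j l; rewrite mxE; case: ifP => dj.
    by have [<-|ne] := eqVneq j l; rewrite // mul0r eqxx.
  case: ifP => dl; first by rewrite eqxx.
  have dj0 : deg j = 0%N by lia.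
  have dl0 : deg l = 0%N by lia.
  by rewrite dj0 dl0 !lev_torus.
move=> a b m [dabm labm].
case: (posnP (deg a)) => [da|da]; case: (posnP (deg b)) => [db|db].
- by rewrite cobound_weight0_torus // phi_torus //; lia.
- have la := lev_torus da; have -> : m = b by apply: weight_inj; lia.
  by rewrite cobound_weight0_torus_nil // torus_ok.
- have lb := lev_torus db; have -> : m = a by apply: weight_inj; lia.
  by rewrite cobound_anti cobound_weight0_torus_nil // phi_anti torus_ok.
- by rewrite cobound_weight0_nil ?nil_ok //; lia.
Qed.

End GradedCochains.
Arguments wX {C N} deg lev j.
Arguments wY {C N} lev j.
Arguments weight_sum_eigen {C N deg lev a b m}.

Ltac decide_ifs := repeat match goal with |- context [if ?b then _ else _] =>
  first [ rewrite (_ : b = false); [|lia] | rewrite (_ : b = true); [|lia] ] end.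

Section Model.
Variables (C : fieldType) (n wn ln : nat).
Hypothesis n_gt5 : (5 < n)%N.
Local Notation N := n.+2.

(* ei k is the index of the basis vector e_(k+1) of the paper: indices are
   0-based, so the nilradical is 0..n-1 and the torus is x = n, y = n+1. *)
Definition ei (k : nat) : 'I_N := inord k.
Definition torusX := ei n.
Definition torusY := ei n.+1.

Lemma val_ei k : (k <= n.+1)%N -> ei k = k :> nat.
Proof. exact: inordK. Qed.

Lemma ei_val (j : 'I_N) : ei j = j.
Proof. exact: inord_val. Qed.

Lemma val_torusX : torusX = n :> nat.
Proof. exact: val_ei. Qed.

Lemma val_torusY : torusY = n.+1 :> nat.
Proof. exact: val_ei. Qed.

(* e_1 has weight (1, 0), e_k has weight (k, 1) for 1 < k < n, e_n has weight
   (wn, ln), namely (n, 2) in R(g^1_(n,1), 2) and (2, 0) in R(g^2_(n,1), 2). *)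
Definition deg (j : 'I_N) : nat :=
  if (j < n - 1)%N then j.+1 else if (j == n - 1 :> nat)%N then wn else 0.
Definition lev (j : 'I_N) : nat :=
  if (0 < j < n - 1)%N then 1 else if (j == n - 1 :> nat)%N then ln else 0.

Variant weight_spec (j : nat) : nat -> nat -> Prop :=
  | WeightFirst of j = 0%N : weight_spec j 1 0
  | WeightChain of (0 < j < n - 1)%N : weight_spec j j.+1 1
  | WeightTop of j = (n - 1)%N : weight_spec j wn ln
  | WeightTorus of (n - 1 < j)%N : weight_spec j 0 0.

Lemma weightP (j : 'I_N) : weight_spec j (deg j) (lev j).
Proof.
rewrite /deg /lev; have [j0|j_gt0] := posnP j; first by rewrite j0; decide_ifs; constructor.
have [lt_j|ge_j] := ltnP j (n - 1); first by decide_ifs; constructor; lia.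
have [top|ntop] := eqVneq (j : nat) (n - 1)%N; first by decide_ifs; constructor.
by decide_ifs; constructor; lia.
Qed.

Lemma deg_ei k : (k < n - 1)%N -> deg (ei k) = k.+1.
Proof. by move=> lt_k; rewrite /deg val_ei; decide_ifs; lia. Qed.

Lemma lev_e0 : lev (ei 0) = 0%N.
Proof. by rewrite /lev val_ei; decide_ifs; lia. Qed.

Lemma lev_ei k : (0 < k < n - 1)%N -> lev (ei k) = 1%N.
Proof. by move=> k_mid; rewrite /lev val_ei; decide_ifs; lia. Qed.

Lemma X_neq_Y : torusX != torusY.
Proof. by rewrite -val_eqE /= !val_ei //; lia. Qed.

Lemma weight_torusX : deg torusX = 0%N /\ lev torusX = 0%N.
Proof. by rewrite /deg /lev val_ei; decide_ifs; lia. Qed.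

Lemma weight_torusY : deg torusY = 0%N /\ lev torusY = 0%N.
Proof. by rewrite /deg /lev val_ei; decide_ifs; lia. Qed.

Variable phi : 'I_N -> 'I_N -> 'rV[C]_N.
Local Notation p a b k := (phi a b 0 k).

(* The diagonal derivation matching phi along the chain [e_1, e_k] = e_(k+1). *)
Fixpoint chainpot (k : nat) : C :=
  if k is k'.+1 then (if k' is 0 then 0 else chainpot k' - p (ei 0) (ei k') (ei k))
  else 0.

Lemma phi_chain (f : 'I_N -> C) : (forall j : 'I_N, (j < n - 1)%N -> f j = chainpot j) ->
  forall k, (0 < k <= n - 3)%N -> p (ei 0) (ei k) (ei k.+1) = f (ei 0) + f (ei k) - f (ei k.+1).
Proof.
move=> f_chain [|k] // k_mid; rewrite !f_chain !val_ei //=; try lia.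
by case: k k_mid => [|k] _ /=; ring.
Qed.

Hypotheses (wn_gt1 : (1 < wn)%N) (ln_neq1 : ln != 1%N).

Lemma weight_inj l l' : deg l = deg l' -> lev l = lev l' -> (0 < deg l)%N -> l = l'.
Proof.
move=> dl ll pos; apply: ord_inj; move: dl ll pos.
by case: (weightP l) => hl; case: (weightP l') => hl'; lia.
Qed.

Lemma deg0_torus l : deg l = 0%N -> l = torusX \/ l = torusY.
Proof.
case: (weightP l) => hl dl; try lia.
have l_lt := ltn_ord l; have [eq_l|eq_l] : l = n :> nat \/ l = n.+1 :> nat by lia.
  by left; apply: ord_inj; rewrite val_ei.
by right; apply: ord_inj; rewrite val_ei.
Qed.

Hypothesis C0 : has_pchar0 C.
Variable sc : 'I_N -> 'I_N -> 'I_N -> C.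
Hypothesis sc_anti : forall i j k, sc i j k = - sc j i k.
Hypotheses (adX_off : forall j k, j != k -> sc j torusX k = 0)
           (adY_off : forall j k, j != k -> sc j torusY k = 0).
Hypotheses (adX_diag : forall j, sc j torusX j = (deg j)%:R - (2 * lev j)%:R)
           (adY_diag : forall j, sc j torusY j = (lev j)%:R).
Hypothesis sc_graded : forall i j k, sc i j k != 0 -> weight_sum deg lev i j k.
Hypothesis sc_chain : forall k, (0 < k <= n - 3)%N -> sc (ei 0) (ei k) (ei k.+1) = 1.

Hypotheses (phi_alt : alternating2 phi) (phi_cocycle : cocycle2 sc phi).

(* A nonzero bracket between e_n and two vectors of the chain: it ties e_n to
   the generators e_1, e_2. *)
Definition anchored := exists a b m : 'I_N,
  [/\ sc a b m != 0, (a < n - 1)%N &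
      (((b < n - 1) && (m == n - 1 :> nat)) || ((b == n - 1 :> nat) && (m < n - 1)))%N].

Lemma torus_diag_model h j : anchored -> deg h = 0%N -> (0 < deg j)%N ->
  p h j j = p h (ei 0) (ei 0) * wX deg lev j + p h (ei 1) (ei 1) * wY lev j.
Proof.
move=> anchor dh dj; case: anchor => a [b [m [ab_neq0 a_lt b_m_top]]].
pose q j := p h j j - p h (ei 0) (ei 0) * wX deg lev j - p h (ei 1) (ei 1) * wY lev j.
suff : q j = 0 by rewrite /q => /eqP; rewrite -addrA -opprD subr_eq0 => /eqP.
have q_add a' b' m' : (0 < deg a')%N -> (0 < deg b')%N -> weight_sum deg lev a' b' m' ->
    sc a' b' m' != 0 -> q m' = q a' + q b'.
  move=> da db abm ab; have [eX eY] := weight_sum_eigen (C := C) abm.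
  rewrite /q (torus_diag_additive sc_anti phi_alt phi_cocycle adX_off adY_off adX_diag
    adY_diag sc_graded weight_inj deg0_torus weight_torusX.1 weight_torusY.1
    weight_torusX.2 weight_torusY.2 X_neq_Y dh da db abm ab) -eX -eY; ring.
have q_e0 : q (ei 0) = 0 by rewrite /q /wX /wY deg_ei ?lev_e0; [ring | lia].
have q_e1 : q (ei 1) = 0 by rewrite /q /wX /wY deg_ei ?lev_ei; [ring | lia ..].
have q_chain k : (k < n - 1)%N -> q (ei k) = 0.
  elim: k => [|k IH] lt_k; first exact: q_e0.
  have [->|k_gt0] := posnP k; first exact: q_e1.
  rewrite (q_add (ei 0) (ei k)) ?q_e0 ?IH ?add0r ?sc_chain ?oner_neq0 ?deg_ei //; try lia.
  by rewrite /weight_sum !deg_ei ?lev_e0 ?lev_ei; lia.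
have q_nil (x : 'I_N) : (x < n - 1)%N -> q x = 0.
  by move=> lt_x; rewrite -(ei_val x) q_chain.
have pos (x : 'I_N) : (x < n)%N -> (0 < deg x)%N by move=> lt_x; case: (weightP x); lia.
have q_top : q (ei (n - 1)) = 0.
  have q_ab : q m = q a + q b.
    apply: q_add (sc_graded ab_neq0) ab_neq0; apply: pos; first lia.
    by case/orP: b_m_top => /andP[]; lia.
  rewrite [q a]q_nil // add0r in q_ab.
  case/orP: b_m_top => /andP[b_lt m_top].
    by rewrite [q b]q_nil // -(ei_val m) (eqP m_top) in q_ab.
  by rewrite [q m]q_nil // -(ei_val b) (eqP b_lt) in q_ab.
have [lt_j|ge_j] := ltnP j (n - 1); first exact: q_nil.
suff -> : j = ei (n - 1) by [].
by apply: ord_inj; rewrite val_ei; move: dj; case: (weightP j); lia.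
Qed.

Theorem coboundary2_model (f : 'I_N -> C) : anchored ->
  (forall j : 'I_N, (j < n - 1)%N -> f j = chainpot j) ->
  (forall a b m : 'I_N, (0 < a < b)%N -> (b < n)%N -> weight_sum deg lev a b m ->
     p a b m = (f a + f b - f m) * sc a b m) ->
  coboundary2 sc phi.
Proof.
move=> anchor f_chain f_rest.
have [degX levX] := weight_torusX; have [degY levY] := weight_torusY.
have degE1 : deg (ei 0) = 1%N by rewrite deg_ei; lia.
have degE2 : deg (ei 1) = 2%N by rewrite deg_ei; lia.
have levE2 : lev (ei 1) = 1%N by rewrite lev_ei; lia.
apply: (coboundary2_of_nilradical C0 sc_anti phi_alt phi_cocycle adX_off adY_off adX_diag
  adY_diag sc_graded weight_inj deg0_torus degX degY levX levY X_neq_Y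
  degE1 lev_e0 degE2 levE2 (f := f)); last first.
- by move=> h j; apply: torus_diag_model.
- move=> a b m da db abm.
  wlog lt_ab : a b m da db abm / (a < b)%N.
    move=> hyp; have [lt|gt|/ord_inj eq] := ltngtP a b; first exact: hyp.
      rewrite (phi_anti phi_alt) sc_anti (hyp b a m) //; first ring.
      by case: abm; split; lia.
    by rewrite eq (phi_diag phi_alt) (sc_diag C0 sc_anti) mulr0.
  have b_lt : (b < n)%N by move: db; case: (weightP b); lia.
  have [a0|a_gt0] := posnP a; last by apply: f_rest; rewrite ?a_gt0.
  have [b_mid m_succ] : (0 < b <= n - 3)%N /\ m = b.+1 :> nat.
    by move: abm; rewrite /weight_sum; case: (weightP a); case: (weightP b);
      case: (weightP m); lia.
  rewrite -(ei_val a) -(ei_val b) -(ei_val m) a0 m_succ sc_chain // mulr1.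
  exact: phi_chain.
Qed.

End Model.

Section RawStructureConstants.
Variables (C : fieldType) (n : nat) (raw : nat -> nat -> nat -> nat -> C).

Lemma ind_neq0 b : ind C b != 0 -> b.
Proof. by case: b => //; rewrite eqxx. Qed.

Lemma ind_mul_neq0 b (c : C) : ind C b * c != 0 -> b.
Proof. by case: b => //; rewrite mul0r eqxx. Qed.

Lemma addr_neq0 (x y : C) : x + y != 0 -> x != 0 \/ y != 0.
Proof.
by have [->|] := eqVneq x 0; [rewrite add0r; right | left].
Qed.

Lemma sc_of_anti (i j k : 'I_n.+2) : sc_of raw i j k = - sc_of raw j i k.
Proof. by rewrite /sc_of opprB. Qed.

Lemma sc_of_graded (deg lev : 'I_n.+2 -> nat) :
  (forall i j k : 'I_n.+2, raw n i.+1 j.+1 k.+1 != 0 -> weight_sum deg lev i j k) ->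
  forall i j k, sc_of raw i j k != 0 -> weight_sum deg lev i j k.
Proof.
move=> raw_graded i j k; rewrite /sc_of => /addr_neq0[/raw_graded //|].
by rewrite oppr_eq0 => /raw_graded[? ?]; split; lia.
Qed.
End RawStructureConstants.

Ltac eval_ind := rewrite /ind; decide_ifs; ring.

Ltac solve_weights := rewrite /weight_sum /deg /lev ?val_ei; decide_ifs; lia.

Ltac support_cases H :=
  match type of H with
  | is_true (_ + _ != 0) => case/addr_neq0: H => H; [support_cases H | support_cases H]
  | is_true (ind _ _ * _ != 0) => move/ind_mul_neq0: H => H
  | is_true (ind _ _ != 0) => move/ind_neq0: H => H
  end.

Section AlgebraR1.
Variables (C : fieldType) (n : nat).
Hypotheses (C0 : has_pchar0 C) (n_gt5 : (5 < n)%N).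
Local Notation N := n.+2.
Local Notation sc := (scR1 C n).
Local Notation deg := (@deg n n).
Local Notation lev := (@lev n 2).
Local Notation ei := (@ei n).
Local Notation torusX := (@torusX n).
Local Notation torusY := (@torusY n).
Local Notation weightP := (@weightP n n 2 n_gt5).

Lemma raw1_graded (i j k : 'I_N) : raw1 C n i.+1 j.+1 k.+1 != 0 -> weight_sum deg lev i j k.
Proof.
rewrite /raw1 => nz; support_cases nz; rewrite /weight_sum /deg /lev; decide_ifs; lia.
Qed.

Lemma sc1_graded i j k : sc i j k != 0 -> weight_sum deg lev i j k.
Proof. exact: (@sc_of_graded C n (@raw1 C) _ _ raw1_graded). Qed.

Lemma sc1_anti i j k : sc i j k = - sc j i k.
Proof. exact: sc_of_anti. Qed.

Lemma adX1_off j k : j != k -> sc j torusX k = 0.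
Proof.
rewrite -val_eqE /= => ne; rewrite /scR1 /sc_of /raw1 val_torusX; eval_ind.
Qed.

Lemma adY1_off j k : j != k -> sc j torusY k = 0.
Proof.
rewrite -val_eqE /= => ne; rewrite /scR1 /sc_of /raw1 val_torusY; eval_ind.
Qed.

Lemma adX1_diag j : sc j torusX j = (deg j)%:R - (2 * lev j)%:R.
Proof.
rewrite /scR1 /sc_of /raw1 val_torusX; have := ltn_ord j.
by case: (weightP j) => hj lt_j; rewrite /ind; decide_ifs; rewrite ?natrB; try ring; lia.
Qed.

Lemma adY1_diag j : sc j torusY j = (lev j)%:R.
Proof.
rewrite /scR1 /sc_of /raw1 val_torusY; have := ltn_ord j.
by case: (weightP j) => hj lt_j; eval_ind.
Qed.

Lemma sc1_chain k : (0 < k <= n - 3)%N -> sc (ei 0) (ei k) (ei k.+1) = 1.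
Proof. by move=> k_mid; rewrite /scR1 /sc_of /raw1 !val_ei; [eval_ind | lia ..]. Qed.

Lemma sc1_top k : (0 < k)%N -> (2 * k.+1 <= n - 1)%N ->
  sc (ei k) (ei (n - 2 - k)) (ei (n - 1)) = (-1) ^+ k.+1.
Proof. by move=> k_gt0 k_le; rewrite /scR1 /sc_of /raw1 !val_ei; [eval_ind | lia ..]. Qed.

Let weight1_inj := weight_inj n_gt5 (ltn_trans (isT : (1 < 5)%N) n_gt5) (isT : 2%N != 1%N).

Variable phi : 'I_N -> 'I_N -> 'rV[C]_N.
Hypotheses (phi_alt : alternating2 phi) (phi_cocycle : cocycle2 sc phi).
Local Notation p a b k := (phi a b 0 k).
Local Notation chainpot := (chainpot phi).

(* The value at e_n is forced by the bracket [e_2, e_(n-2)] = e_n. *)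
Definition der1 (j : 'I_N) : C :=
  if (j == n - 1 :> nat)%N
  then chainpot 1 + chainpot (n - 3) - p (ei 1) (ei (n - 3)) (ei (n - 1))
  else chainpot j.

Lemma der1_chain (j : 'I_N) : (j < n - 1)%N -> der1 j = chainpot j.
Proof. by move=> lt_j; rewrite /der1 ifN_eq //; lia. Qed.

Lemma phi1_top k : (0 < k)%N -> (2 * k.+1 <= n - 1)%N ->
  p (ei k) (ei (n - 2 - k)) (ei (n - 1)) =
  (der1 (ei k) + der1 (ei (n - 2 - k)) - der1 (ei (n - 1))) * (-1) ^+ k.+1.
Proof.
elim: k => [|k IH] // _ k_le; have [->|k_gt0] := posnP k.
  have -> : (n - 2 - 1 = n - 3)%N by lia.
  by rewrite /der1 !val_ei; decide_ifs; [ring | lia ..].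
set c := (n - 3 - k)%N; have -> : (n - 2 - k.+1 = c)%N by rewrite /c; lia.
have E := cocycle2_coord phi_cocycle (ei 0) (ei k) (ei c) (ei (n - 1)).
have s1 : \sum_l p (ei k) (ei c) l * sc (ei 0) l (ei (n - 1)) = 0.
  by rewrite (sum_mul_sc_ungraded sc1_graded) // => l; case: (weightP l) => hl; solve_weights.
have s2 : \sum_l p (ei 0) (ei c) l * sc (ei k) l (ei (n - 1)) =
    p (ei 0) (ei c) (ei c.+1) * (-1) ^+ k.+1.
  rewrite (sum_mul_sc_graded sc1_graded weight1_inj _ (l0 := ei c.+1)); try solve_weights.
  by rewrite (_ : c.+1 = n - 2 - k)%N ?sc1_top //; lia.
have s3 : \sum_l p (ei 0) (ei k) l * sc (ei c) l (ei (n - 1)) =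
    p (ei 0) (ei k) (ei k.+1) * (-1) ^+ k.+1.
  rewrite (sum_mul_sc_graded sc1_graded weight1_inj _ (l0 := ei k.+1)); try solve_weights.
  rewrite sc1_anti (_ : c = (n - 2 - k.+1)%N); last by rewrite /c; lia.
  by rewrite sc1_top ?exprS; [ring | lia ..].
have s4 : \sum_l sc (ei 0) (ei k) l * p l (ei c) (ei (n - 1)) = p (ei k.+1) (ei c) (ei (n - 1)).
  by rewrite (sum_sc_mul_graded sc1_graded weight1_inj _ (l0 := ei k.+1)) ?sc1_chain ?mul1r //;
    solve_weights.
have s5 : \sum_l sc (ei 0) (ei c) l * p l (ei k) (ei (n - 1)) =
    - p (ei k) (ei c.+1) (ei (n - 1)).
  rewrite (sum_sc_mul_graded sc1_graded weight1_inj _ (l0 := ei c.+1)); try solve_weights.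
  by rewrite sc1_chain ?mul1r ?(phi_anti phi_alt (ei c.+1)) //; lia.
have s6 : \sum_l sc (ei k) (ei c) l * p l (ei 0) (ei (n - 1)) = 0.
  by rewrite (sum_sc_mul_ungraded sc1_graded) // => l; case: (weightP l) => hl; solve_weights.
rewrite s1 s2 s3 s4 s5 s6 !(phi_chain n_gt5 der1_chain) in E; try lia.
rewrite (_ : c.+1 = n - 2 - k)%N ?IH in E; try lia.
apply/eqP; rewrite -subr_eq0 -oppr_eq0 -[X in _ == X]E; apply/eqP.
by rewrite !exprS; ring.
Qed.

Lemma phi1_rest (a b m : 'I_N) : (0 < a < b)%N -> (b < n)%N -> weight_sum deg lev a b m ->
  p a b m = (der1 a + der1 b - der1 m) * sc a b m.
Proof.
move=> ab b_lt abm.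
have [a_le [b_eq m_top]] : (2 * a.+1 <= n - 1 /\ b = n - 2 - a :> nat /\ m = n - 1 :> nat)%N.
  by move: abm; rewrite /weight_sum; case: (weightP a); case: (weightP b); case: (weightP m); lia.
rewrite -(ei_val a) -(ei_val b) -(ei_val m) b_eq m_top sc1_top ?phi1_top //; lia.
Qed.

Lemma anchored1 : anchored sc.
Proof.
exists (ei 1), (ei (n - 3)), (ei (n - 1)); rewrite (_ : n - 3 = n - 2 - 1)%N; last lia.
by split; rewrite ?sc1_top ?expr2 ?mulrNN ?mulr1 ?oner_neq0 ?val_ei //; lia.
Qed.

Theorem coboundary2_R1 : coboundary2 sc phi.
Proof.
exact: (coboundary2_model n_gt5 (ltn_trans (isT : (1 < 5)%N) n_gt5) (isT : 2%N != 1%N) C0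
  sc1_anti adX1_off adY1_off adX1_diag adY1_diag sc1_graded sc1_chain phi_alt phi_cocycle
  anchored1 der1_chain phi1_rest).
Qed.
End AlgebraR1.

Section AlgebraR2.
Variables (C : fieldType) (n : nat).
Hypotheses (C0 : has_pchar0 C) (n_gt5 : (5 < n)%N).
Local Notation N := n.+2.
Local Notation sc := (scR2 C n).
Local Notation deg := (@deg n 2).
Local Notation lev := (@lev n 0).
Local Notation ei := (@ei n).
Local Notation torusX := (@torusX n).
Local Notation torusY := (@torusY n).
Local Notation weightP := (@weightP n 2 0 n_gt5).

Lemma raw2_graded (i j k : 'I_N) : raw2 C n i.+1 j.+1 k.+1 != 0 -> weight_sum deg lev i j k.
Proof.
rewrite /raw2 => nz; support_cases nz; rewrite /weight_sum /deg /lev; decide_ifs; lia.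
Qed.

Lemma adX2_off j k : j != k -> sc j torusX k = 0.
Proof.
rewrite -val_eqE /= => ne; rewrite /scR2 /sc_of /raw2 val_torusX; eval_ind.
Qed.

Lemma adY2_off j k : j != k -> sc j torusY k = 0.
Proof.
rewrite -val_eqE /= => ne; rewrite /scR2 /sc_of /raw2 val_torusY; eval_ind.
Qed.

Lemma adX2_diag j : sc j torusX j = (deg j)%:R - (2 * lev j)%:R.
Proof.
rewrite /scR2 /sc_of /raw2 val_torusX; have := ltn_ord j.
by case: (weightP j) => hj lt_j; eval_ind.
Qed.

Lemma adY2_diag j : sc j torusY j = (lev j)%:R.
Proof.
rewrite /scR2 /sc_of /raw2 val_torusY; have := ltn_ord j.
by case: (weightP j) => hj lt_j; eval_ind.
Qed.

Lemma sc2_graded i j k : sc i j k != 0 -> weight_sum deg lev i j k.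
Proof. exact: (@sc_of_graded C n (@raw2 C) _ _ raw2_graded). Qed.

Lemma sc2_anti i j k : sc i j k = - sc j i k.
Proof. exact: sc_of_anti. Qed.

Lemma sc2_chain k : (0 < k <= n - 3)%N -> sc (ei 0) (ei k) (ei k.+1) = 1.
Proof. by move=> k_mid; rewrite /scR2 /sc_of /raw2 !val_ei; [eval_ind | lia ..]. Qed.

Lemma sc2_top k : (0 < k <= n - 4)%N -> sc (ei k) (ei (n - 1)) (ei k.+2) = 1.
Proof. by move=> k_mid; rewrite /scR2 /sc_of /raw2 !val_ei; [eval_ind | lia ..]. Qed.

Let weight2_inj := weight_inj n_gt5 (isT : (1 < 2)%N) (isT : 0%N != 1%N).

Variable phi : 'I_N -> 'I_N -> 'rV[C]_N.
Hypotheses (phi_alt : alternating2 phi) (phi_cocycle : cocycle2 sc phi).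
Local Notation p a b k := (phi a b 0 k).
Local Notation chainpot := (chainpot phi).

(* The value at e_n is forced by the bracket [e_2, e_n] = e_4. *)
Definition der2 (j : 'I_N) : C :=
  if (j == n - 1 :> nat)%N then p (ei 1) (ei (n - 1)) (ei 3) + chainpot 3 - chainpot 1
  else chainpot j.

Lemma der2_chain (j : 'I_N) : (j < n - 1)%N -> der2 j = chainpot j.
Proof. by move=> lt_j; rewrite /der2 ifN_eq //; lia. Qed.

Lemma phi2_top k : (0 < k <= n - 4)%N ->
  p (ei k) (ei (n - 1)) (ei k.+2) = der2 (ei k) + der2 (ei (n - 1)) - der2 (ei k.+2).
Proof.
elim: k => [|k IH] // k_mid; have [->|k_gt0] := posnP k.
  by rewrite /der2 !val_ei; decide_ifs; [ring | lia ..].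
have E := cocycle2_coord phi_cocycle (ei 0) (ei k) (ei (n - 1)) (ei k.+3).
have s1 : \sum_l p (ei k) (ei (n - 1)) l * sc (ei 0) l (ei k.+3) =
    p (ei k) (ei (n - 1)) (ei k.+2).
  by rewrite (sum_mul_sc_graded sc2_graded weight2_inj _ (l0 := ei k.+2)) ?sc2_chain ?mulr1 //;
    solve_weights.
have s2 : \sum_l p (ei 0) (ei (n - 1)) l * sc (ei k) l (ei k.+3) = 0.
  by rewrite (sum_mul_sc_ungraded sc2_graded) // => l; case: (weightP l) => hl; solve_weights.
have s3 : \sum_l p (ei 0) (ei k) l * sc (ei (n - 1)) l (ei k.+3) =
    - p (ei 0) (ei k) (ei k.+1).
  rewrite (sum_mul_sc_graded sc2_graded weight2_inj _ (l0 := ei k.+1)); try solve_weights.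
  by rewrite sc2_anti sc2_top ?mulrN1 //; lia.
have s4 : \sum_l sc (ei 0) (ei k) l * p l (ei (n - 1)) (ei k.+3) =
    p (ei k.+1) (ei (n - 1)) (ei k.+3).
  by rewrite (sum_sc_mul_graded sc2_graded weight2_inj _ (l0 := ei k.+1)) ?sc2_chain ?mul1r //;
    solve_weights.
have s5 : \sum_l sc (ei 0) (ei (n - 1)) l * p l (ei k) (ei k.+3) = 0.
  by rewrite (sum_sc_mul_ungraded sc2_graded) // => l; case: (weightP l) => hl; solve_weights.
have s6 : \sum_l sc (ei k) (ei (n - 1)) l * p l (ei 0) (ei k.+3) =
    - p (ei 0) (ei k.+2) (ei k.+3).
  rewrite (sum_sc_mul_graded sc2_graded weight2_inj _ (l0 := ei k.+2)); try solve_weights.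
  by rewrite sc2_top ?mul1r ?(phi_anti phi_alt (ei k.+2)) //; lia.
rewrite s1 s2 s3 s4 s5 s6 IH ?(phi_chain n_gt5 der2_chain) in E; try lia.
by apply/eqP; rewrite -subr_eq0 -oppr_eq0 -[X in _ == X]E; apply/eqP; ring.
Qed.

Lemma phi2_rest (a b m : 'I_N) : (0 < a < b)%N -> (b < n)%N -> weight_sum deg lev a b m ->
  p a b m = (der2 a + der2 b - der2 m) * sc a b m.
Proof.
move=> ab b_lt abm.
have [a_le [b_top m_succ]] : (a <= n - 4 /\ b = n - 1 :> nat /\ m = a.+2 :> nat)%N.
  by move: abm; rewrite /weight_sum; case: (weightP a); case: (weightP b); case: (weightP m); lia.
rewrite -(ei_val a) -(ei_val b) -(ei_val m) b_top m_succ sc2_top ?mulr1 ?phi2_top //; lia.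
Qed.

Lemma anchored2 : anchored sc.
Proof.
exists (ei 1), (ei (n - 1)), (ei 3).
by split; rewrite ?sc2_top ?oner_neq0 ?val_ei //; lia.
Qed.

Theorem coboundary2_R2 : coboundary2 sc phi.
Proof.
exact: (coboundary2_model n_gt5 (isT : (1 < 2)%N) (isT : 0%N != 1%N) C0 sc2_anti
  adX2_off adY2_off adX2_diag adY2_diag sc2_graded sc2_chain phi_alt phi_cocycle
  anchored2 der2_chain phi2_rest).
Qed.
End AlgebraR2.

Theorem theorem3p8 (C : numClosedFieldType) (n : nat) (hn : (5 < n)%N) :
  (odd n -> H2_adj_trivial (scR1 C n)) /\ H2_adj_trivial (scR2 C n).
Proof.
have C0 := pchar_num C.
split=> [_|] phi phi_alt phi_cocycle.
  exact: (@coboundary2_R1 C n C0 hn phi phi_alt phi_cocycle).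
exact: (@coboundary2_R2 C n C0 hn phi phi_alt phi_cocycle).
Qed.
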